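(* Let $t \ge 0$ and consider the three-taxon multispecies coalescent described in the context, with species tree $S$ of topology $AB|C$ and internal branch length $t$. Let $G_1,\dots,G_L$ be the gene trees (topologies and exact coalescence times) of $L$ independent loci. Let $\mathbb{P}_L$ denote the probability that the GLASS/Maximum-Tree method (equivalently, maximum likelihood under the multispecies coalescent) applied to $G_1,\dots,G_L$ fails to output the topology $AB|C$. Then the limit $\alpha_{\mathrm{ML}}(t) = -\lim_{L\to\infty}\frac{1}{L}\ln \mathbb{P}_L$ exists and $$\alpha_{\mathrm{ML}}(t) = t.$$
   Context: Multispecies coalescent, three-taxon case: $S$ is an ultrametric rooted species tree on three species $A,B,C$ with topology $AB|C$, all (haploid) populations of equal size $N$, time measured in units of $N$ generations backwards from the present. Populations are $A,B,C$ (extant), $AB$ (ancestor of $A$ and $B$, from divergence time $\tau_{AB}$ to $\tau_{ABC}$) and $ABC$ (root population, from $\tau_{ABC}$ to $\infty$), with $\tau_{AB}\le\tau_{ABC}$; the internal branch length is $t=\tau_{ABC}-\tau_{AB}$. For each locus one lineage is sampled from each of $A,B,C$ at time $0$; going backwards in time, within each population every pair of lineages present in that population coalesces independently at rate $1$, and lineages entering an ancestral population merge into it. Loci are independent (unlinked). In particular the lineages from $A$ and $B$ fail to coalesce in population $AB$ with probability $e^{-t}$, in which case the three gene-tree topologies are equally likely. Gene trees are assumed known exactly, including coalescence times. GLASS/Maximum Tree: for each pair of species $X,Y$, compute the minimum over loci of the coalescence time of the lineages from $X$ and $Y$ in $G_\ell$; the output topology groups together the pair with the smallest such minimum. Under this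 model this method coincides with maximum likelihood estimation of the species tree from the gene trees. *)

From HB Require Import structures.
From mathcomp Require Import all_boot all_order all_algebra.
From mathcomp Require Import all_classical all_reals all_analysis.
Set Implicit Arguments. Unset Strict Implicit. Unset Printing Implicit Defensive.
Import Order.TTheory GRing.Theory Num.Theory.
Import numFieldNormedType.Exports.
Local Open Scope classical_set_scope.
Local Open Scope ring_scope.

Definition mutually_independent d (T : measurableType d) (R : realType)
  (P : probability T R) (I : eqType) (X : I -> T -> R) : Prop :=
  forall (s : seq I) (B : I -> set R), uniq s ->
    (forall i, measurable (B i)) ->
    P (\bigcap_(i in [set` s]) (X i @^-1` B i)) =
    (\prod_(i <- s) P (X i @^-1` B i))%E.

Inductive pair3 := pAB | pAC | pBC.

(** Exponential(1) "pair clocks" used at one locus.  Each pair of lineages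
    present in a population coalesces at rate 1 independently:
    - clk_AB1 : clock of the pair (A,B) in population AB;
    - clk_2   : clock of the pair ((AB),C) in population ABC, when A and B
                already coalesced in AB;
    - clk_AB3, clk_AC3, clk_BC3 : clocks of the three pairs in population ABC
                when A and B did not coalesce in AB;
    - clk_last : clock of the two remaining lineages in ABC after the first
                coalescence in the three-lineage case. *)
Definition clk_AB1 : 'I_6 := inord 0.
Definition clk_2 : 'I_6 := inord 1.
Definition clk_AB3 : 'I_6 := inord 2.
Definition clk_AC3 : 'I_6 := inord 3.
Definition clk_BC3 : 'I_6 := inord 4.
Definition clk_last : 'I_6 := inord 5.

(** Coalescence time (measured from the present) of the lineages of a pair
    in the gene tree of a locus with clocks [c], for the species tree
    AB|C with divergence times tAB and tABC = tAB + t. *)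
Definition coal_time (R : realType) (tAB t : R) (c : 'I_6 -> R) (p : pair3) : R :=
  let tABC := tAB + t in
  if c clk_AB1 < t then
    (* A and B coalesce in population AB: gene tree topology AB|C *)
    match p with
    | pAB => tAB + c clk_AB1
    | _ => tABC + c clk_2
    end
  else
    (* three lineages enter ABC; first coalescence is the pair with the
       smallest clock, the root follows after a further clock *)
    let cp := match p with pAB => c clk_AB3 | pAC => c clk_AC3 | pBC => c clk_BC3 end in
    let m := Num.min (c clk_AB3) (Num.min (c clk_AC3) (c clk_BC3)) in
    if cp == m then tABC + m else tABC + m + c clk_last.

(** Minimum over the loci 0..L-1 of the coalescence time of pair p
    (for L = 0 this is an irrelevant default value). *)
Definition min_coal (R : realType) (tAB t : R) (G : nat -> 'I_6 -> R)
  (L : nat) (p : pair3) : R :=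
  \big[Num.min/coal_time tAB t (G 0%N) p]_(l < L) coal_time tAB t (G l) p.

(** GLASS / Maximum Tree outputs AB|C iff the pair (A,B) has the strictly
    smallest minimal coalescence time. *)
Definition glass_outputs_AB (R : realType) (tAB t : R) (G : nat -> 'I_6 -> R)
  (L : nat) : Prop :=
  min_coal tAB t G L pAB < min_coal tAB t G L pAC /\
  min_coal tAB t G L pAB < min_coal tAB t G L pBC.

Definition glass_fail_prob d (T : measurableType d) (R : realType)
  (P : probability T R) (tAB t : R) (X : nat -> 'I_6 -> T -> R) (L : nat) : R :=
  fine (P [set w | ~ glass_outputs_AB tAB t (fun l k => X l k w) L]).

(* GLASS can only fail if, at every locus, the lineages of A and B do not
   coalesce along the internal branch; by independence this has probability
   exactly e^{-tL}, so P_L <= e^{-tL}.  Conversely, fix e > 0: if at every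
   locus A and B miss the internal branch and every pair clock in the root
   population exceeds e, except that A and C coalesce within time e of
   tau_ABC at the first locus, then the pair (A,C) beats (A,B) and GLASS
   fails.  This event has probability C_e e^{-(t+e)L} with C_e > 0, and
   squeezing -ln P_L / L between the two bounds gives the rate t. *)

From HB Require Import structures.
From mathcomp Require Import all_boot all_order all_algebra.
From mathcomp Require Import all_classical all_reals all_analysis.
From mathcomp Require Import measurable_realfun ring lra.
Set Implicit Arguments. Unset Strict Implicit. Unset Printing Implicit Defensive.
Import Order.TTheory GRing.Theory Num.Theory.
Import numFieldNormedType.Exports.
Local Open Scope classical_set_scope.
Local Open Scope ring_scope.

Section exponential_clock.
Variables (R : realType) (d : measure_display) (T : measurableType d)
  (P : probability T R) (Y : {RV P >-> R}).
Hypothesis Yexp : distribution P Y = exponential_prob 1 :> (set R -> \bar R).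

Local Notation mu := (distribution P Y).

Let mu_neg : mu `]-oo, 0[ = 0%E.
Proof.
rewrite Yexp; apply: integral0_eq => x /=.
by rewrite in_itv /= => x_lt0; rewrite lt0_exponential_pdf.
Qed.

Let mu_point a : mu [set a] = 0%E.
Proof. by rewrite Yexp /exponential_prob integral_set1. Qed.

Let mu_itv0o a : 0 < a -> mu `[0, a[ = (1 - expR (- a))%:E.
Proof.
move=> a_gt0; have := exponential_prob_itv0c 1 a_gt0.
rewrite -Yexp (@itv_bndbnd_setU _ _ _ (BLeft a)) ?bnd_simp ?ltW// set_itv1.
rewrite measureU //=; last first.
  by rewrite -subset0 => x [/=]; rewrite in_itv /= => /andP[_ /lt_eqF/eqP].
by rewrite mu_point adde0 mulN1r EFinB.
Qed.

Lemma exponential_rv_itv0o a : 0 < a -> P (Y @^-1` `[0, a[) = (1 - expR (- a))%:E.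
Proof. exact: mu_itv0o. Qed.

Lemma exponential_rv_tail a : 0 <= a -> P (Y @^-1` `[a, +oo[) = (expR (- a))%:E.
Proof.
move=> a_ge0; change (mu `[a, +oo[ = (expR (- a))%:E).
have -> : mu `[a, +oo[ = (1 - mu `]-oo, a[)%E.
  by rewrite -setCitvl; apply: probability_setC.
have -> : mu `]-oo, a[ = (mu `]-oo, 0%R[ + mu `[0%R, a[)%E.
  rewrite {1}(@itv_bndbnd_setU _ _ _ (BLeft 0)) ?bnd_simp//.
  apply: measureU => //; rewrite -subset0 => x [/=]; rewrite !in_itv /=.
  by move=> x_lt0 /andP[x_ge0 _]; move: (lt_le_trans x_lt0 x_ge0); rewrite ltxx.
rewrite mu_neg add0e; have [->|a_neq0] := eqVneq a 0.
  by rewrite set_itvco0 measure0 sube0 oppr0 expR0.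
rewrite mu_itv0o; last by rewrite lt_neqAle eq_sym a_neq0.
by rewrite -EFinB opprB addrC subrK.
Qed.
End exponential_clock.

Section independent_box.
Variables (R : realType) (d : measure_display) (T : measurableType d)
  (P : probability T R) (K : finType) (X : nat -> K -> {RV P >-> R}).

Definition box_event (L : nat) (B : nat -> K -> set R) : set T :=
  [set w | forall l k, (l < L)%N -> B l k (X l k w)].

Let box_eventE L B : box_event L B =
  \bigcap_(i in [set` [seq (l, k) | l <- iota 0 L, k <- enum K]])
    ((X i.1 i.2 : T -> R) @^-1` B i.1 i.2).
Proof.
apply/seteqP; split => w /=.
  move=> Bw [l k] /allpairsP[[l' k'] /= [+ _ [-> ->]]].
  by rewrite mem_iota => /andP[_ /Bw].
move=> Bw l k lL; apply: (Bw (l, k)).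
by apply/allpairsP; exists (l, k); rewrite /= mem_iota lL mem_enum.
Qed.

Lemma measurable_box_event L B : (forall l k, measurable (B l k)) ->
  measurable (box_event L B).
Proof.
move=> mB; rewrite box_eventE; apply: fin_bigcap_measurable; first exact: finite_seq.
move=> [l k] _; rewrite -[X in measurable X]setTI; exact: measurable_funPT.
Qed.

Lemma prob_box_event L B :
  mutually_independent P (fun i : nat * K => (X i.1 i.2 : T -> R)) ->
  (forall l k, measurable (B l k)) ->
  P (box_event L B) = (\prod_(0 <= l < L) \prod_(k : K) P (X l k @^-1` B l k))%E.
Proof.
move=> Xind mB; rewrite box_eventE Xind //=; last first.
  by apply: allpairs_uniq => [||[? ?] [? ?]]; rewrite ?iota_uniq ?enum_uniq.
by rewrite big_allpairs /index_iota subn0; under eq_bigr do rewrite big_enum.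
Qed.
End independent_box.

Lemma measurable_bigmin d (T : measurableType d) (R : realType) (I : Type)
    (r : seq I) (x0 : T -> R) (F : I -> T -> R) :
  measurable_fun setT x0 -> (forall i, measurable_fun setT (F i)) ->
  measurable_fun setT (fun w => \big[Num.min/x0 w]_(i <- r) F i w).
Proof.
move=> mx0 mF; elim: r => [|i r IHr]; first by under eq_fun do rewrite big_nil.
by under eq_fun do rewrite big_cons; exact: measurable_minr.
Qed.

Lemma cvg_ln_rate (R : realType) (t : R) (p : nat -> R) :
  (forall L, (0 < L)%N -> p L <= expR (- t * L%:R)) ->
  (forall e, 0 < e -> exists2 C, 0 < C &
     forall L, (0 < L)%N -> C * expR (- (t + e) * L%:R) <= p L) ->
  (fun L => - ln (p L) / L%:R) @ \oo --> t.
Proof.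
move=> p_ub p_lb; apply/cvgrPdist_le => eps eps_gt0.
have eps2_gt0 : 0 < eps / 2 by rewrite divr_gt0.
have [C C_gt0 C_lb] := p_lb _ eps2_gt0.
near=> L; have L_gt0 : (0 < L)%N by near: L; exact: nbhs_infty_gt.
have Lr_gt0 : 0 < L%:R :> R by rewrite ltr0n.
have lb_gt0 : 0 < C * expR (- (t + eps / 2) * L%:R) by rewrite mulr_gt0 ?expR_gt0.
have pL_gt0 : 0 < p L := lt_le_trans lb_gt0 (C_lb L L_gt0).
have ln_ub : ln (p L) <= - t * L%:R.
  by rewrite -[leRHS]expRK ler_ln ?posrE ?expR_gt0 ?p_ub.
have ln_lb : ln C - (t + eps / 2) * L%:R <= ln (p L).
  by rewrite -mulNr -[X in _ + X]expRK -lnM ?posrE ?expR_gt0 // ler_ln ?posrE ?C_lb.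
have lnC_small : - ln C <= eps / 2 * L%:R.
  rewrite -ler_pdivrMl //; near: L; exact: nbhs_infty_ger.
rewrite ler_distlC ler_pdivlMr // ler_pdivrMr // !mulrDl !mulNr.
have eps_split : eps * L%:R = eps / 2 * L%:R + eps / 2 * L%:R.
  by rewrite -mulrDl -splitr.
rewrite eps_split; apply/andP; split; lra.
Unshelve. all: by end_near.
Qed.

Lemma clk_vals : [/\ val clk_AB1 = 0%N, val clk_AB3 = 2%N, val clk_AC3 = 3%N,
  val clk_BC3 = 4%N & val clk_last = 5%N].
Proof. by rewrite /= !inordK. Qed.

Section glass_clocks.
Variables (R : realType) (tAB t : R).

Lemma min_coal_le (c : nat -> 'I_6 -> R) L p l : (l < L)%N ->
  min_coal tAB t c L p <= coal_time tAB t (c l) p.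
Proof.
by move=> lL; exact: (bigmin_le _ (Ordinal lL) (fun i : 'I_L => coal_time tAB t (c i) p)).
Qed.

Lemma le_min_coal (c : nat -> 'I_6 -> R) L p b : (0 < L)%N ->
  (forall l, (l < L)%N -> b <= coal_time tAB t (c l) p) -> b <= min_coal tAB t c L p.
Proof. by move=> L_gt0 b_le; apply: le_bigmin => [|i _]; apply: b_le. Qed.

Lemma root_le_coal_time (c : 'I_6 -> R) p : (forall k, 0 <= c k) -> p <> pAB ->
  tAB + t <= coal_time tAB t c p.
Proof.
move=> c_ge0 p_neqAB; rewrite /coal_time.
have min_ge0 : 0 <= Num.min (c clk_AB3) (Num.min (c clk_AC3) (c clk_BC3)).
  by rewrite !le_min !c_ge0.
case: ifP => _; first by case: p p_neqAB => // _; rewrite lerDl.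
by have := c_ge0 clk_last; case: ifP => _; lra.
Qed.

Lemma coal_time_AB_late e (c : 'I_6 -> R) : 0 <= e -> t <= c clk_AB1 ->
  e <= c clk_AB3 -> e <= c clk_last -> 0 <= c clk_AC3 -> 0 <= c clk_BC3 ->
  tAB + t + e <= coal_time tAB t c pAB.
Proof.
move=> e_ge0 AB1_late AB3_ge last_ge AC3_ge0 BC3_ge0.
rewrite /coal_time ltNge AB1_late /=.
have min_ge0 : 0 <= Num.min (c clk_AB3) (Num.min (c clk_AC3) (c clk_BC3)).
  by rewrite !le_min AC3_ge0 BC3_ge0 (le_trans e_ge0).
by case: ifP => [/eqP <-|_]; lra.
Qed.

Lemma coal_time_AC_early e (c : 'I_6 -> R) : t <= c clk_AB1 ->
  0 <= c clk_AC3 < e -> e <= c clk_AB3 -> e <= c clk_BC3 ->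
  coal_time tAB t c pAC < tAB + t + e.
Proof.
move=> AB1_late /andP[AC3_ge0 AC3_lt] AB3_ge BC3_ge.
have AC3_min : Num.min (c clk_AB3) (Num.min (c clk_AC3) (c clk_BC3)) = c clk_AC3.
  rewrite (@min_r _ _ (c clk_AB3)); last by rewrite ge_min (ltW (lt_le_trans AC3_lt AB3_ge)).
  by rewrite min_l // (ltW (lt_le_trans AC3_lt BC3_ge)).
by rewrite /coal_time (ltNge (c clk_AB1)) AB1_late /= AC3_min eqxx ltrD2l.
Qed.

Definition late_AB_box (k : 'I_6) : set R :=
  if k == clk_AB1 then `[t, +oo[%classic else `[0, +oo[%classic.

Lemma glass_fail_late_AB (c : nat -> 'I_6 -> R) L : 0 <= t -> (0 < L)%N ->
  (forall l k, (l < L)%N -> 0 <= c l k) -> ~ glass_outputs_AB tAB t c L ->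
  forall l k, (l < L)%N -> late_AB_box k (c l k).
Proof.
move=> t_ge0 L_gt0 c_ge0 not_AB l k lL.
rewrite /late_AB_box; case: eqP => [->|_] /=; rewrite in_itv /= andbT; last exact: c_ge0.
rewrite leNgt; apply/negP => AB1_early; apply: not_AB.
have AB_early : min_coal tAB t c L pAB < tAB + t.
  by apply: le_lt_trans (min_coal_le c pAB lL) _; rewrite /coal_time AB1_early ltrD2l.
have root_le p : p <> pAB -> tAB + t <= min_coal tAB t c L p.
  move=> p_neqAB; apply: le_min_coal => // l' l'L.
  by apply: root_le_coal_time => // k'; exact: c_ge0.
by split; apply: lt_le_trans AB_early (root_le _ _).
Qed.

Definition early_AC_box (e : R) (first : bool) (k : 'I_6) : set R :=
  if k == clk_AB1 then `[t, +oo[%classic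
  else if first && (k == clk_AC3) then `[0, e[%classic else `[e, +oo[%classic.

Lemma early_AC_box_clocks e first (c : 'I_6 -> R) :
  (forall k, early_AC_box e first k (c k)) ->
  [/\ t <= c clk_AB1, e <= c clk_AB3, e <= c clk_BC3, e <= c clk_last
    & if first then 0 <= c clk_AC3 < e else e <= c clk_AC3].
Proof.
move=> c_box; have [v1 v2 v3 v4 v5] := clk_vals.
move: (c_box clk_AB1) (c_box clk_AB3) (c_box clk_AC3) (c_box clk_BC3) (c_box clk_last).
rewrite /early_AC_box -!val_eqE v1 v2 v3 v4 v5 /= ?andbF.
by case: first {c_box} => /=; rewrite !in_itv /= ?andbT => AB1 AB3 AC3 BC3 last; split.
Qed.

Lemma glass_fail_early_AC (c : nat -> 'I_6 -> R) L e : 0 < e -> (0 < L)%N ->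
  (forall l k, (l < L)%N -> early_AC_box e (l == 0)%N k (c l k)) ->
  ~ glass_outputs_AB tAB t c L.
Proof.
move=> e_gt0 L_gt0 c_box [AB_lt_AC _].
have AB_late : tAB + t + e <= min_coal tAB t c L pAB.
  apply: le_min_coal => // l lL.
  have [AB1 AB3 BC3 last AC3] := early_AC_box_clocks (c_box l ^~ lL).
  apply: coal_time_AB_late => //; first exact: ltW.
  - by case: (l == 0)%N AC3 => [/andP[]|/(le_trans (ltW e_gt0))].
  - exact: le_trans (ltW e_gt0) BC3.
have [AB1 AB3 BC3 _ AC3] := early_AC_box_clocks (c_box 0%N ^~ L_gt0).
have AC_early := coal_time_AC_early AB1 AC3 AB3 BC3.
have := lt_le_trans AB_lt_AC (min_coal_le c pAC L_gt0).
by move=> /(le_lt_trans AB_late)/lt_trans/(_ AC_early); rewrite ltxx.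
Qed.
End glass_clocks.

Section glass_measurable.
Variables (R : realType) (d : measure_display) (T : measurableType d)
  (P : probability T R) (tAB t : R) (X : nat -> 'I_6 -> {RV P >-> R}).

Local Notation clocks w := (fun l k => X l k w).

Let measurable_coal_time l p : measurable_fun setT (fun w => coal_time tAB t (clocks w l) p).
Proof.
rewrite /coal_time; apply: measurable_fun_ifT; first exact: measurable_fun_ltr.
  by case: p; apply: measurable_funD.
have measurable_min : measurable_fun setT (fun w => Num.min (X l clk_AB3 w)
    (Num.min (X l clk_AC3 w) (X l clk_BC3 w))).
  exact: (measurable_minr _ (measurable_minr _ _)).
apply: measurable_fun_ifT; first by apply: measurable_fun_eqr => //; case: p.
  exact: measurable_funD.
by apply: measurable_funD => //; exact: measurable_funD.
Qed.

Let measurable_min_coal L p : measurable_fun setT (fun w => min_coal tAB t (clocks w) L p).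
Proof.
by apply: measurable_bigmin => *; exact: measurable_coal_time.
Qed.

Lemma measurable_glass_fail L : measurable [set w | ~ glass_outputs_AB tAB t (clocks w) L].
Proof.
have measurable_lt p q :
    measurable [set w | min_coal tAB t (clocks w) L p < min_coal tAB t (clocks w) L q].
  rewrite -[X in measurable X]setTI.
  exact: (measurable_fun_ltr (measurable_min_coal L p) (measurable_min_coal L q)).
rewrite -[X in measurable X]/(~` (_ `&` _)); apply: measurableC.
by apply: measurableI; exact: measurable_lt.
Qed.
End glass_measurable.

Section glass_fail_bounds.
Variables (R : realType) (d : measure_display) (T : measurableType d)
  (P : probability T R) (tAB t : R) (X : nat -> 'I_6 -> {RV P >-> R}).
Hypothesis Xind : mutually_independent P (fun i : nat * 'I_6 => (X i.1 i.2 : T -> R)).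
Hypothesis Xexp : forall l k,
  distribution P (X l k) = exponential_prob 1 :> (set R -> \bar R).
Hypothesis t_ge0 : 0 <= t.

Local Notation clocks w := (fun l k => X l k w).
Local Notation fail L := [set w | ~ glass_outputs_AB tAB t (clocks w) L].
Local Notation p := (glass_fail_prob P tAB t (fun l k => X l k : T -> R)).

Let pE L : (p L)%:E = P (fail L).
Proof. by rewrite fineK // fin_num_measure //; exact: measurable_glass_fail. Qed.

Let prod_clock_weights (a b c : R) (first : bool) :
  \prod_(k < 6) (if k == clk_AB1 then a else if first && (k == clk_AC3) then b else c) =
  a * (if first then b else c) * c ^+ 4.
Proof.
have [v1 _ v3 _ _] := clk_vals.
rewrite !big_ord_recl big_ord0 -!val_eqE /= v1 v3.
by case: first => /=; ring.
Qed.

Let prob_late_AB_box l k :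
  P (X l k @^-1` late_AB_box t k) = (if k == clk_AB1 then expR (- t) else 1)%:E.
Proof. by rewrite /late_AB_box; case: ifP => _; rewrite exponential_rv_tail // oppr0 expR0. Qed.

Lemma glass_fail_prob_le L : (0 < L)%N -> p L <= expR (- t * L%:R).
Proof.
move=> L_gt0; rewrite -lee_fin pE.
pose nonneg := box_event X L (fun _ _ => `[0, +oo[%classic).
pose late := box_event X L (fun _ => late_AB_box t).
have nonneg1 : P nonneg = 1%E.
  rewrite prob_box_event // big1 // => l _; rewrite big1 // => k _.
  by rewrite exponential_rv_tail // oppr0 expR0.
have lateE : P late = (expR (- t * L%:R))%:E.
  rewrite prob_box_event //; last by move=> l k; rewrite /late_AB_box; case: ifP.
  under eq_bigr => l _ do
    rewrite (eq_bigr _ (fun k _ => prob_late_AB_box l k)) prodEFin -big_mkcond big_pred1_eq.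
  by rewrite prodEFin prodr_const_nat subn0 -expRM_natr.
have measurable_late : measurable late.
  by apply: measurable_box_event => l k; rewrite /late_AB_box; case: ifP.
have measurable_nonneg : measurable nonneg.
  by apply: measurable_box_event => *; exact: measurable_itv.
have fail_sub : fail L `<=` late `|` ~` nonneg.
  move=> w failw; have [nonneg_w|] := pselect (nonneg w); last by right.
  left; apply: (glass_fail_late_AB t_ge0 L_gt0 _ failw) => l k lL.
  by have := nonneg_w l k lL; rewrite /= in_itv /= andbT.
have nonnegC0 : P (~` nonneg) = 0%E.
  by rewrite (probability_setC P measurable_nonneg) nonneg1 subee.
have subadd : (P (late `|` ~` nonneg) <= P late + P (~` nonneg))%E.
  exact: (measureU2 P measurable_late (measurableC measurable_nonneg)).
apply: le_trans (le_measure _ _ _ fail_sub) _; rewrite ?inE.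
- exact: measurable_glass_fail.
- exact: measurableU (measurableC measurable_nonneg).
by rewrite (le_trans subadd) // nonnegC0 adde0 lateE.
Qed.

Let prob_early_AC_box e first l k : 0 < e ->
  P (X l k @^-1` early_AC_box t e first k) =
  (if k == clk_AB1 then expR (- t)
   else if first && (k == clk_AC3) then 1 - expR (- e) else expR (- e))%:E.
Proof.
move=> e_gt0; rewrite /early_AC_box; case: ifP => _; first exact: exponential_rv_tail.
by case: ifP => _; [exact: exponential_rv_itv0o|exact/exponential_rv_tail/ltW].
Qed.

Lemma glass_fail_prob_ge e : 0 < e -> exists2 C, 0 < C &
  forall L, (0 < L)%N -> C * expR (- (t + e) * L%:R) <= p L.
Proof.
move=> e_gt0; pose s := e / 5%:R.
(* Every locus but the first forces five of its clocks above [s]. *)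
have s_gt0 : 0 < s by rewrite divr_gt0.
pose w first := expR (- t) * (if first then 1 - expR (- s) else expR (- s)) * expR (- s) ^+ 4.
have w_false : w false = expR (- (t + e)).
  by rewrite /w /= -mulrA -exprS -expRM_natr -expRD /s; congr expR; field.
have w_true_gt0 : 0 < w true.
  by rewrite /w !mulr_gt0 ?exprn_gt0 ?expR_gt0 // subr_gt0 expR_lt1 oppr_lt0.
exists (w true / w false); first by rewrite divr_gt0 // w_false expR_gt0.
move=> L L_gt0; rewrite -lee_fin pE.
pose early := box_event X L (fun l => early_AC_box t s (l == 0)%N).
have measurable_early_box l k : measurable (early_AC_box t s (l == 0)%N k).
  by rewrite /early_AC_box; case: ifP => _; [|case: ifP => _]; exact: measurable_itv.
have earlyE : P early = (w true * w false ^+ L.-1)%:E.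
  rewrite prob_box_event //.
  under eq_bigr => l _ do
    rewrite (eq_bigr _ (fun k _ => prob_early_AC_box (l == 0)%N l k s_gt0)) prodEFin prod_clock_weights.
  rewrite prodEFin (big_ltn L_gt0) /= (@eq_big_nat _ _ _ 1 L _ (fun=> w false)); last first.
    by case.
  by rewrite prodr_const_nat subn1.
have early_sub : early `<=` fail L.
  by move=> w' early_w'; exact: (glass_fail_early_AC s_gt0 L_gt0 early_w').
have w_false_neq0 : w false != 0 by rewrite w_false gt_eqF ?expR_gt0.
rewrite expRM_natr -w_false -[in w false ^+ L](prednK L_gt0) exprS mulrA divfK //.
rewrite -earlyE; apply: le_measure early_sub; rewrite inE.
  exact: measurable_box_event.
exact: measurable_glass_fail.
Qed.
End glass_fail_bounds.

Theorem mainTheorem1 (R : realType) (d : measure_display) (T : measurableType d)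
  (P : probability T R) (tAB t : R) (X : nat -> 'I_6 -> {RV P >-> R}) :
  0 <= tAB -> 0 <= t ->
  mutually_independent P (fun i : nat * 'I_6 => (X i.1 i.2 : T -> R)) ->
  (forall (l : nat) (k : 'I_6),
     distribution P (X l k) = exponential_prob 1 :> (set R -> \bar R)) ->
  (fun L : nat => - ln (glass_fail_prob P tAB t (fun l k => X l k : T -> R) L)
                  / L%:R) @ \oo --> t.
Proof.
move=> _ t_ge0 Xind Xexp.
apply: cvg_ln_rate => [L|e e_gt0].
  exact: (glass_fail_prob_le tAB Xind Xexp t_ge0).
exact: (glass_fail_prob_ge tAB Xind Xexp t_ge0).
Qed.
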